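(* Let $M$ be a $*$-left Ehresmann monoid and $H\subseteq M$ an atomic subset. Then $H$ is proper if and only if for all $h,k\in H$: $h\,\sigma\,k$ holds exactly when $hk^*=kh^*$.
   Context: A $*$-left Ehresmann monoid is a monoid $M$ with unary operations $+,*$ such that $x^+x=x$, $(x^+y^+)^+=x^+y^+$, $x^+y^+=y^+x^+$, $(xy)^+=(xy^+)^+$, $xx^*=x$, $(x^* )^*=x^*$, $x^*y^*=y^*x^*$, $(xy^* )^*y^*=(xy^* )^*$, $(x^* )^+=x^*$, $(x^+)^*=x^+$. Its semilattice of projections is $E=\{a^+\}=\{a^*\}$ (ordered by $e\le f$ iff $ef=e$); $\sigma$ is the least monoid congruence on $M$ containing $E\times E$. $H\subseteq M$ is atomic if: (H1) $E\subseteq H$; (H2) $h\in H,e\in E$ imply $he\in H$ and $(he)^*=h^*e$; (H3) if $h\in H$, $k\in H\setminus E$, $h^*\ge k^+$ then $hk\in H$ and $(hk)^*=k^*$; (H4) every $m\in M$ is $\sigma$-related to some $h\in H$; (H5) if $h,k,w\in H$, $hk\,\sigma\,w$ and $k^*=w^*$, then some $u\in H$ has $u\,\sigma\,h$ and $u^*\ge k^+$. $H$ is proper if for all $h,k\in H$: ($h^*=k^*$ and $h\,\sigma\,k$) iff $h=k$. *)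

Record StarLeftEhresmann : Type := {
  carrier :> Type;
  mul : carrier -> carrier -> carrier;
  one : carrier;
  plus : carrier -> carrier;
  star : carrier -> carrier;
  mulA : forall x y z, mul x (mul y z) = mul (mul x y) z;
  mul1l : forall x, mul one x = x;
  mul1r : forall x, mul x one = x;
  ax_plus_l : forall x, mul (plus x) x = x;
  ax_plus_proj : forall x y, plus (mul (plus x) (plus y)) = mul (plus x) (plus y);
  ax_plus_comm : forall x y, mul (plus x) (plus y) = mul (plus y) (plus x);
  ax_plus_mul : forall x y, plus (mul x y) = plus (mul x (plus y));
  ax_star_r : forall x, mul x (star x) = x;
  ax_star_idem : forall x, star (star x) = star x;
  ax_star_comm : forall x y, mul (star x) (star y) = mul (star y) (star x);
  ax_star_mul : forall x y, mul (star (mul x (star y))) (star y) = star (mul x (star y));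
  ax_plus_star : forall x, plus (star x) = star x;
  ax_star_plus : forall x, star (plus x) = plus x
}.

Arguments mul {_} _ _.
Arguments one {_}.
Arguments plus {_} _.
Arguments star {_} _.

Section Defs.
Variable M : StarLeftEhresmann.

Definition proj (e : M) : Prop := exists a : M, e = plus a.

Definition ple (e f : M) : Prop := mul e f = e.

Definition monoid_congruence (R : M -> M -> Prop) : Prop :=
  (forall x, R x x) /\ (forall x y, R x y -> R y x) /\
  (forall x y z, R x y -> R y z -> R x z) /\
  (forall x y u v, R x y -> R u v -> R (mul x u) (mul y v)).

Definition sigma (x y : M) : Prop :=
  forall R : M -> M -> Prop, monoid_congruence R ->
    (forall e f, proj e -> proj f -> R e f) -> R x y.

Definition atomic (H : M -> Prop) : Prop :=
  (forall e, proj e -> H e) /\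
  (forall h e, H h -> proj e -> H (mul h e) /\ star (mul h e) = mul (star h) e) /\
  (forall h k, H h -> H k -> ~ proj k -> ple (plus k) (star h) ->
              H (mul h k) /\ star (mul h k) = star k) /\
  (forall m, exists h, H h /\ sigma m h) /\
  (forall h k w, H h -> H k -> H w -> sigma (mul h k) w -> star k = star w ->
              exists u, H u /\ sigma u h /\ ple (plus k) (star u)).

Definition proper (H : M -> Prop) : Prop :=
  forall h k, H h -> H k -> ((star h = star k /\ sigma h k) <-> h = k).

End Defs.

Arguments proj {M} e.
Arguments ple {M} e f.
Arguments sigma {M} x y.
Arguments atomic {M} H.
Arguments proper {M} H.


(* Right multiplication by a projection does not change the sigma-class, so
   [h] and [k] are sigma-related exactly when [h k^*] and [k h^*] are.  By (H2)
   these two elements lie in [H] and have the same star [h^* k^*], so in a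
   proper [H] sigma-related elements satisfy [h k^* = k h^*].  Conversely, if
   that equation characterises sigma on [H], then [h^* = k^*] together with
   [h sigma k] gives [h = h h^* = h k^* = k h^* = k k^* = k]. *)

Section StarLeftEhresmannSigma.
Variable M : StarLeftEhresmann.
Implicit Types x y z e : M.

Lemma sigma_refl x : sigma x x.
Proof. intros R (Rrefl & _) _; apply Rrefl. Qed.

Lemma sigma_sym x y : sigma x y -> sigma y x.
Proof.
intros Sxy R HR HE; pose proof HR as (_ & Rsym & _).
apply Rsym, Sxy; assumption.
Qed.

Lemma sigma_trans x y z : sigma x y -> sigma y z -> sigma x z.
Proof.
intros Sxy Syz R HR HE; pose proof HR as (_ & _ & Rtrans & _).
apply (Rtrans x y z); [apply Sxy | apply Syz]; assumption.
Qed.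

Lemma plus_one : plus (@one M) = one.
Proof. rewrite <- (mul1r M (plus one)); apply ax_plus_l. Qed.

Lemma proj_one : proj (@one M).
Proof. exists one; rewrite plus_one; reflexivity. Qed.

Lemma proj_star x : proj (star x).
Proof. exists (star x); rewrite ax_plus_star; reflexivity. Qed.

Lemma sigma_mulr_proj x e : proj e -> sigma x (mul x e).
Proof.
intros Pe R HR HE; destruct HR as (Rrefl & _ & _ & Rmul).
assert (R1 : R (mul x one) (mul x e)).
{ apply Rmul; [apply Rrefl | apply HE; [apply proj_one | exact Pe]]. }
rewrite mul1r in R1; exact R1.
Qed.

Lemma sigma_mul_star x y : sigma x y <-> sigma (mul x (star y)) (mul y (star x)).
Proof.
split; intros S.
- apply sigma_trans with x; [apply sigma_sym, sigma_mulr_proj, proj_star |].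
  apply sigma_trans with y; [exact S | apply sigma_mulr_proj, proj_star].
- apply sigma_trans with (mul x (star y)); [apply sigma_mulr_proj, proj_star |].
  apply sigma_trans with (mul y (star x)); [exact S |].
  apply sigma_sym, sigma_mulr_proj, proj_star.
Qed.

Lemma sigma_of_mul_star_eq x y : mul x (star y) = mul y (star x) -> sigma x y.
Proof. intros E; apply (sigma_mul_star x y); rewrite E; apply sigma_refl. Qed.

Lemma eq_of_star_eq_mul_star_eq x y :
  star x = star y -> mul x (star y) = mul y (star x) -> x = y.
Proof.
intros Es E.
rewrite <- (ax_star_r M x), <- (ax_star_r M y), Es, E, Es; reflexivity.
Qed.

End StarLeftEhresmannSigma.

Section ProperAtomic.
Variables (M : StarLeftEhresmann) (H : M -> Prop).
Hypothesis H_mulr_proj :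
  forall h e, H h -> proj e -> H (mul h e) /\ star (mul h e) = mul (star h) e.

Lemma proper_sigma_mul_star_eq h k :
  proper H -> H h -> H k -> sigma h k -> mul h (star k) = mul k (star h).
Proof.
intros P Hh Hk S.
destruct (H_mulr_proj h (star k) Hh (proj_star M k)) as [Hhk Ehk].
destruct (H_mulr_proj k (star h) Hk (proj_star M h)) as [Hkh Ekh].
apply (proj1 (P _ _ Hhk Hkh)); split.
- rewrite Ehk, Ekh; apply ax_star_comm.
- exact (proj1 (sigma_mul_star M h k) S).
Qed.

Lemma proper_of_sigma_mul_star_eq :
  (forall h k, H h -> H k -> sigma h k -> mul h (star k) = mul k (star h)) ->
  proper H.
Proof.
intros C h k Hh Hk; split.
- intros [Es S]; apply eq_of_star_eq_mul_star_eq; [exact Es | apply C; assumption].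
- intros <-; split; [reflexivity | apply sigma_refl].
Qed.

End ProperAtomic.

Theorem mainTheorem6 (M : StarLeftEhresmann) (H : M -> Prop) :
  atomic H ->
  (proper H <->
   (forall h k : M, H h -> H k ->
      (sigma h k <-> mul h (star k) = mul k (star h)))).
Proof.
intros (_ & H2 & _); split.
- intros P h k Hh Hk; split.
  + exact (proper_sigma_mul_star_eq M H H2 h k P Hh Hk).
  + apply sigma_of_mul_star_eq.
- intros C; apply proper_of_sigma_mul_star_eq.
  intros h k Hh Hk; apply C; assumption.
Qed.
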